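(* Let $S$ be a $\tau$-uniform sampling of $[n]$ ($\tau\ge1$) with $c_1$-uniform support ($c_1\ge1$), and let $\mathcal G=\mathrm{supp}(S)$. Then $f(x)=\frac1{|\mathcal G|}\sum_{C\in\mathcal G}f_C(x)$ for all $x$, and $$L\le\frac1{|\mathcal G|}\sum_{C\in\mathcal G}L_C\le L^{\mathcal G}_{\max}\le L_{\max}.$$ The last inequality holds without assuming $\tau$-uniformity.
   Context: $f=\frac1n\sum_{i=1}^nf_i$, $f_i:\mathbb{R}^d\to\mathbb{R}$ smooth; for nonempty $C\subseteq[n]$, $f_C=\frac1{|C|}\sum_{i\in C}f_i$ and $L_C$ is the smoothness constant (Lipschitz constant of $\nabla f_C$); $L_i=L_{\{i\}}$, $L=L_{[n]}$, $L_{\max}=\max_iL_i$. A sampling is a random subset $S$ of $[n]$ with $p_C=\Pr(S=C)$, $p_i=\Pr(i\in S)$, $\mathrm{supp}(S)=\{C:p_C>0\}$; $\tau$-uniform means $p_i$ equal for all $i$ and $|S|=\tau$ a.s.; $c_1$-uniform support means $|\{C\in\mathrm{supp}(S):i\in C\}|=c_1$ for all $i$. $L^{\mathcal G}_{\max}=\max_i\frac1{c_1}\sum_{C\in\mathcal G:\,i\in C}L_C$. *)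

From HB Require Import structures.
From mathcomp Require Import all_boot all_order all_algebra.
From mathcomp Require Import all_classical all_reals all_analysis.
Set Implicit Arguments. Unset Strict Implicit. Unset Printing Implicit Defensive.
Import Order.TTheory GRing.Theory Num.Theory.
Import numFieldNormedType.Exports.
Local Open Scope ring_scope.

Section Defs.
Variable R : realType.

Definition enorm (d : nat) (v : 'rV[R]_d) : R :=
  Num.sqrt (\sum_(j < d) (v ord0 j) ^+ 2).

Definition grad (d : nat) (g : 'rV[R]_d -> R) (x : 'rV[R]_d) : 'rV[R]_d :=
  \row_(j < d) ('D_(delta_mx ord0 j) g x).

Definition smooth_fun (d : nat) (g : 'rV[R]_d -> R) : Prop :=
  (forall x, differentiable g x) /\
  exists L : R, forall x y, enorm (grad g x - grad g y) <= L * enorm (x - y).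

Definition Lsmooth (d : nat) (g : 'rV[R]_d -> R) : R :=
  inf [set L : R | (0 <= L) /\
        forall x y, enorm (grad g x - grad g y) <= L * enorm (x - y)]%classic.

Definition fC (n d : nat) (f : 'I_n -> 'rV[R]_d -> R) (C : {set 'I_n})
  : 'rV[R]_d -> R :=
  fun x => (#|C|%:R)^-1 * \sum_(i in C) f i x.

Definition favg (n d : nat) (f : 'I_n -> 'rV[R]_d -> R) : 'rV[R]_d -> R :=
  fun x => (n%:R)^-1 * \sum_(i < n) f i x.

Definition LC (n d : nat) (f : 'I_n -> 'rV[R]_d -> R) (C : {set 'I_n}) : R :=
  Lsmooth (fC f C).

Definition Lall (n d : nat) (f : 'I_n -> 'rV[R]_d -> R) : R := Lsmooth (favg f).

Definition Lmax (n d : nat) (f : 'I_n -> 'rV[R]_d -> R) : R :=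
  \big[Num.max/0]_(i < n) LC f [set i].

(* a sampling: probability mass function p_C = Pr(S = C) on subsets of [n] *)
Definition sampling (n : nat) (p : {set 'I_n} -> R) : Prop :=
  (forall C, 0 <= p C) /\ \sum_(C : {set 'I_n}) p C = 1.

Definition prob_in (n : nat) (p : {set 'I_n} -> R) (i : 'I_n) : R :=
  \sum_(C : {set 'I_n} | i \in C) p C.

Definition supp (n : nat) (p : {set 'I_n} -> R) : {set {set 'I_n}} :=
  [set C : {set 'I_n} | 0 < p C].

Definition tau_uniform (n : nat) (p : {set 'I_n} -> R) (tau : nat) : Prop :=
  (forall i j, prob_in p i = prob_in p j) /\
  (forall C, 0 < p C -> #|C| = tau).

Definition c1_uniform_support (n : nat) (p : {set 'I_n} -> R) (c1 : nat) : Prop :=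
  forall i : 'I_n, #|[set C in supp p | i \in C]| = c1.

Definition LGmax (n d : nat) (f : 'I_n -> 'rV[R]_d -> R)
  (G : {set {set 'I_n}}) (c1 : nat) : R :=
  \big[Num.max/0]_(i < n) ((c1%:R)^-1 * \sum_(C in G | i \in C) LC f C).

End Defs.

From HB Require Import structures.
From mathcomp Require Import all_boot all_order all_algebra.
From mathcomp Require Import all_classical all_reals all_analysis.
From mathcomp Require Import ring lra.
Set Implicit Arguments. Unset Strict Implicit. Unset Printing Implicit Defensive.
Import Order.TTheory GRing.Theory Num.Theory.
Import numFieldNormedType.Exports.
Local Open Scope ring_scope.

(* Because the gradient is linear and the Euclidean norm satisfies the triangle
   inequality, and because the infimum defining the smoothness constant is
   attained, [L (sum_k w_k g_k) <= sum_k w_k L (g_k)] for weights [w >= 0].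
   As [f_C] is the average of the [f_i], [i \in C], this gives [L_C <= L_max],
   hence [L^G_max <= L_max].
   If every [C] in the support [G] has [tau] elements and every [i] lies in
   exactly [c1] of them, double counting gives [|G| tau = n c1], so for every [F]
     [1/|G| sum_(C in G) 1/tau sum_(i in C) F C i
        = 1/n sum_i 1/c1 sum_(C in G | i \in C) F C i].
   For [F C i = f_i x] this is [f = 1/|G| sum_C f_C], which with subadditivity
   gives [L <= 1/|G| sum_C L_C]; for [F C i = L_C] the right-hand side is a mean
   of the quantities whose maximum is [L^G_max]. *)

Section EuclideanNorm.
Variables (R : realType) (d : nat).
Implicit Types u v : 'rV[R]_d.

Lemma sumsq_ge0 v : 0 <= \sum_(j < d) v ord0 j ^+ 2.
Proof. by apply: sumr_ge0 => j _; apply: sqr_ge0. Qed.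

Lemma sqr_enorm v : enorm v ^+ 2 = \sum_(j < d) v ord0 j ^+ 2.
Proof. by rewrite sqr_sqrtr ?sumsq_ge0. Qed.

Lemma enorm_ge0 v : 0 <= enorm v.
Proof. exact: sqrtr_ge0. Qed.

Lemma enorm_eq0 {v} : enorm v = 0 -> forall j, v ord0 j = 0.
Proof.
move=> v0 j; apply/eqP; rewrite -sqrf_eq0; apply/eqP.
have /psumr_eq0P : \sum_(j < d) v ord0 j ^+ 2 = 0 by rewrite -sqr_enorm v0 expr0n.
by apply => // k _; apply: sqr_ge0.
Qed.

Lemma enorm0 : enorm (0 : 'rV[R]_d) = 0.
Proof. by rewrite /enorm big1 ?sqrtr0 // => j _; rewrite mxE expr0n. Qed.

Lemma enormZ (a : R) v : enorm (a *: v) = `|a| * enorm v.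
Proof.
rewrite /enorm (eq_bigr (fun j => a ^+ 2 * v ord0 j ^+ 2)) => [|j _]; last first.
  by rewrite mxE exprMn.
by rewrite -mulr_sumr sqrtrM ?sqr_ge0 // sqrtr_sqr.
Qed.

Lemma dot_le_enorm u v : \sum_(j < d) u ord0 j * v ord0 j <= enorm u * enorm v.
Proof.
have [u0|u_neq0] := eqVneq (enorm u) 0.
  by rewrite big1 ?u0 ?mul0r // => j _; rewrite (enorm_eq0 u0) mul0r.
have [v0|v_neq0] := eqVneq (enorm v) 0.
  by rewrite big1 ?v0 ?mulr0 // => j _; rewrite (enorm_eq0 v0) mulr0.
have uv_gt0 : 0 < enorm u * enorm v by rewrite mulr_gt0 // lt0r ?enorm_ge0 ?andbT.
(* [0 <= sum_j (|v| u_j - |u| v_j)^2] expands to [2 |u| |v| (u.v) <= 2 |u|^2 |v|^2]. *)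
have expand a b : \sum_(j < d) (b * u ord0 j - a * v ord0 j) ^+ 2 =
    b ^+ 2 * enorm u ^+ 2 - 2 * a * b * \sum_(j < d) u ord0 j * v ord0 j +
    a ^+ 2 * enorm v ^+ 2.
  rewrite (eq_bigr (fun j => b ^+ 2 * u ord0 j ^+ 2 - 2 * a * b *
      (u ord0 j * v ord0 j) + a ^+ 2 * v ord0 j ^+ 2)) => [|j _]; last by ring.
  by rewrite big_split sumrB -!mulr_sumr !sqr_enorm.
have := sumsq_ge0 (enorm v *: u - enorm u *: v).
under eq_bigr => j _ do rewrite !mxE.
rewrite expand; nra.
Qed.

Lemma enormD u v : enorm (u + v) <= enorm u + enorm v.
Proof.
rewrite -ler_sqr ?nnegrE ?addr_ge0 ?enorm_ge0 // sqrrD !sqr_enorm.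
have -> : \sum_(j < d) (u + v) ord0 j ^+ 2 = \sum_(j < d) u ord0 j ^+ 2 +
    2 * \sum_(j < d) u ord0 j * v ord0 j + \sum_(j < d) v ord0 j ^+ 2.
  rewrite (eq_bigr (fun j => u ord0 j ^+ 2 + 2 * (u ord0 j * v ord0 j) +
      v ord0 j ^+ 2)) => [|j _]; last by rewrite mxE; ring.
  by rewrite !big_split -mulr_sumr.
by rewrite lerD2r lerD2l mulr_natl lerMn2r dot_le_enorm orbT.
Qed.

Lemma enorm_sum_le (I : Type) (r : seq I) (P : pred I) (w : I -> R)
    (v : I -> 'rV[R]_d) : (forall k, P k -> 0 <= w k) ->
  enorm (\sum_(k <- r | P k) w k *: v k) <= \sum_(k <- r | P k) w k * enorm (v k).
Proof.
move=> w_ge0; elim/big_ind2: _ => [|x1 x2 y1 y2 le1 le2|k Pk].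
- by rewrite enorm0.
- exact: le_trans (enormD _ _) (lerD le1 le2).
- by rewrite enormZ ger0_norm ?w_ge0.
Qed.

End EuclideanNorm.

Section Smoothness.
Variables (R : realType) (d : nat).
Implicit Types (g h : 'rV[R]_d -> R) (x y : 'rV[R]_d).

Lemma grad_cst (c : R) x : grad (cst c) x = 0.
Proof. by apply/rowP => j; rewrite !mxE derive_cst. Qed.

Lemma gradD g h x : differentiable g x -> differentiable h x ->
  grad (g + h) x = grad g x + grad h x.
Proof.
by move=> dg dh; apply/rowP => j; rewrite !mxE deriveD //; exact: diff_derivable.
Qed.

Lemma gradZ (k : R) g x : differentiable g x -> grad (k *: g) x = k *: grad g x.
Proof. by move=> dg; apply/rowP => j; rewrite !mxE deriveZ //; exact: diff_derivable. Qed.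

Lemma differentiable_grad_sum (I : Type) (r : seq I) (P : pred I)
    (g : I -> 'rV[R]_d -> R) : (forall k, P k -> forall x, differentiable (g k) x) ->
  (forall x, differentiable (\sum_(k <- r | P k) g k) x) /\
  (forall x, grad (\sum_(k <- r | P k) g k) x = \sum_(k <- r | P k) grad (g k) x).
Proof.
move=> dg; suff [dS gradS] : (forall x, differentiable (\sum_(k <- r | P k) g k) x) /\
    grad (\sum_(k <- r | P k) g k) =1 \sum_(k <- r | P k) grad (g k).
  by split=> // x; rewrite gradS fct_sumE.
elim/big_ind2: _ => [|h1 G1 h2 G2 [dh1 gh1] [dh2 gh2]|k Pk].
- by split=> x; [exact: differentiable_cst | rewrite grad_cst].
- by split=> x; [exact: differentiableD | rewrite gradD // gh1 gh2].
- by split=> x; [exact: dg|].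
Qed.

Definition grad_lipschitz g (L : R) : Prop :=
  0 <= L /\ forall x y, enorm (grad g x - grad g y) <= L * enorm (x - y).

Lemma Lsmooth_le g L : grad_lipschitz g L -> Lsmooth g <= L.
Proof. by move=> gL; apply: ge_inf gL; exists 0 => ? []. Qed.

(* The infimum is attained: if [D <= L E] for every admissible [L] and [E > 0],
   then [D / E] is a lower bound of the admissible constants. *)
Lemma grad_lipschitz_Lsmooth g : smooth_fun g -> grad_lipschitz g (Lsmooth g).
Proof.
case=> _ [L gL]; set S := [set L | grad_lipschitz g L]%classic.
have S_max : S (Num.max L 0).
  split=> [|x y]; first by rewrite le_max lexx orbT.
  by apply: le_trans (gL x y) _; rewrite ler_wpM2r ?enorm_ge0 // le_max lexx.
have S_neq0 : nonempty S by exists (Num.max L 0).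
split=> [|x y]; first by apply: lb_le_inf S_neq0 _ => ? [].
have := enorm_ge0 (x - y); rewrite le_eqVlt => /orP[/eqP E0|E_gt0].
  by have [_ /(_ x y)] := S_max; rewrite -E0 !mulr0.
rewrite -ler_pdivrMr //; apply: lb_le_inf S_neq0 _ => L' [_ gL'].
by rewrite ler_pdivrMr.
Qed.

Section WeightedSum.
Variables (I : Type) (r : seq I) (P : pred I) (w : I -> R) (g : I -> 'rV[R]_d -> R).
Hypothesis w_ge0 : forall k, P k -> 0 <= w k.

Lemma grad_lipschitz_wsum (L : I -> R) :
  (forall k, P k -> forall x, differentiable (g k) x) ->
  (forall k, P k -> grad_lipschitz (g k) (L k)) ->
  grad_lipschitz (\sum_(k <- r | P k) w k *: g k) (\sum_(k <- r | P k) w k * L k).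
Proof.
move=> dg gL; have [_ gradE] :=
  differentiable_grad_sum r (fun k Pk x => differentiableZ (w k) (dg k Pk x)).
have {}gradE z : grad (\sum_(k <- r | P k) w k *: g k) z =
    \sum_(k <- r | P k) w k *: grad (g k) z.
  by rewrite gradE; apply: eq_bigr => k Pk; apply: gradZ; apply: dg.
split=> [|x y]; first by apply: sumr_ge0 => k Pk; rewrite mulr_ge0 ?w_ge0 ?(gL k Pk).1.
rewrite !gradE -sumrB; under eq_bigr do rewrite -scalerBr.
apply: le_trans (enorm_sum_le _ _ w_ge0) _.
rewrite mulr_suml; apply: ler_sum => k Pk; rewrite -mulrA.
by rewrite ler_wpM2l ?w_ge0 ?(gL k Pk).2.
Qed.

Hypothesis sg : forall k, P k -> smooth_fun (g k).

Let g_diff k (Pk : P k) : forall x, differentiable (g k) x := (sg Pk).1.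

Let grad_lipschitz_wsum_Lsmooth : grad_lipschitz
  (\sum_(k <- r | P k) w k *: g k) (\sum_(k <- r | P k) w k * Lsmooth (g k)).
Proof.
exact: grad_lipschitz_wsum g_diff (fun k Pk => grad_lipschitz_Lsmooth (sg Pk)).
Qed.

Lemma smooth_wsum : smooth_fun (\sum_(k <- r | P k) w k *: g k).
Proof.
split; last by eexists; case: grad_lipschitz_wsum_Lsmooth.
by have [] := differentiable_grad_sum r
  (fun k (Pk : P k) x => differentiableZ (w k) (g_diff Pk x)).
Qed.

Lemma Lsmooth_wsum_le :
  Lsmooth (\sum_(k <- r | P k) w k *: g k) <= \sum_(k <- r | P k) w k * Lsmooth (g k).
Proof. exact: Lsmooth_le grad_lipschitz_wsum_Lsmooth. Qed.

End WeightedSum.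

End Smoothness.

Lemma mulVnK (R : numFieldType) (k : nat) (x : R) : (0 < k)%N -> k%:R^-1 * (x *+ k) = x.
Proof. by move=> k_gt0; rewrite -[x *+ k]mulr_natl mulKf // pnatr_eq0 -lt0n. Qed.

Lemma mean_le_bigmax (R : realFieldType) (n : nat) (a : 'I_n -> R) :
  n%:R^-1 * \sum_(i < n) a i <= \big[Num.max/0]_(i < n) a i.
Proof.
case: n a => [|n] a; first by rewrite big_ord0 mulr0 big_ord0.
rewrite ler_pdivrMl ?ltr0Sn // mulr_natl.
apply: le_trans (_ : \sum_(i < n.+1) \big[Num.max/0]_(j < n.+1) a j <= _).
  by apply: ler_sum => i _; apply: le_bigmax.
by rewrite sumr_const card_ord.
Qed.

Section RegularFamily.
Variables (n c1 : nat) (G : {set {set 'I_n}}).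
Hypothesis G_regular : forall i, #|[set C in G | i \in C]| = c1.

Lemma exchange_big_family (R : nmodType) (F : {set 'I_n} -> 'I_n -> R) :
  \sum_(C in G) \sum_(i in C) F C i = \sum_i \sum_(C in G | i \in C) F C i.
Proof. exact: exchange_big_dep. Qed.

Lemma sum_family_mem_cst (R : nmodType) i (a : R) :
  \sum_(C in G | i \in C) a = a *+ c1.
Proof. by rewrite sumr_const -(G_regular i) cardsE. Qed.

Variable tau : nat.
Hypothesis G_uniform : {in G, forall C : {set 'I_n}, #|C| = tau}.

Lemma card_family_mul : (#|G| * tau = n * c1)%N.
Proof.
have count_C : (\sum_(C in G) \sum_(i in C) 1 = #|G| * tau)%N.
  rewrite (eq_bigr (fun=> tau)) => [|C /G_uniform <-]; last by rewrite sum1_card.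
  by rewrite sum_nat_const.
have count_i : (\sum_i \sum_(C in G | i \in C) 1 = n * c1)%N.
  rewrite (eq_bigr (fun=> c1)) => [|i _]; first by rewrite sum_nat_const card_ord.
  by rewrite sum1_card -(G_regular i) cardsE.
by rewrite -count_C -count_i; apply: exchange_big_dep.
Qed.

Lemma family_average (R : realFieldType) (F : {set 'I_n} -> 'I_n -> R) :
  #|G|%:R^-1 * \sum_(C in G) tau%:R^-1 * \sum_(i in C) F C i =
  n%:R^-1 * \sum_i c1%:R^-1 * \sum_(C in G | i \in C) F C i.
Proof.
rewrite -!mulr_sumr exchange_big_family !mulrA -!invfM -!natrM.
by rewrite card_family_mul mulnC.
Qed.

End RegularFamily.

Section SmoothnessConstants.
Variables (R : realType) (n d : nat) (f : 'I_n -> 'rV[R]_d -> R).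
Hypothesis f_smooth : forall i, smooth_fun (f i).

Lemma fCE C : fC f C = \sum_(i in C) #|C|%:R^-1 *: f i.
Proof. by rewrite fct_sumE; apply/funext => x; rewrite /fC mulr_sumr. Qed.

Lemma smooth_fC C : smooth_fun (fC f C).
Proof. by rewrite fCE; apply: smooth_wsum => // i _; rewrite invr_ge0 ler0n. Qed.

Lemma LC_le_mean C : LC f C <= \sum_(i in C) #|C|%:R^-1 * Lsmooth (f i).
Proof. by rewrite /LC fCE; apply: Lsmooth_wsum_le => // i _; rewrite invr_ge0 ler0n. Qed.

Lemma LC_set1 i : LC f [set i] = Lsmooth (f i).
Proof.
congr Lsmooth; apply/funext => x.
by rewrite /fC cards1 invr1 mul1r big_set1.
Qed.

Lemma Lmax_ge0 : 0 <= Lmax f.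
Proof. exact: bigmax_ge_id. Qed.

Lemma Lsmooth_le_Lmax i : Lsmooth (f i) <= Lmax f.
Proof. by rewrite -LC_set1; exact: (le_bigmax 0 (fun j => LC f [set j]) i). Qed.

Lemma LC_le_Lmax (C : {set 'I_n}) i : i \in C -> LC f C <= Lmax f.
Proof.
move=> Ci; apply: le_trans (LC_le_mean C) _.
have C_gt0 : (0 < #|C|)%N by apply/card_gt0P; exists i.
apply: le_trans (_ : \sum_(k in C) #|C|%:R^-1 * Lmax f <= _).
  by apply: ler_sum => k _; rewrite ler_wpM2l ?invr_ge0 ?ler0n ?Lsmooth_le_Lmax.
by rewrite -mulr_sumr sumr_const mulVnK.
Qed.

Section RegularSupport.
Variables (c1 : nat) (G : {set {set 'I_n}}).
Hypotheses (c1_gt0 : (0 < c1)%N) (G_regular : forall i, #|[set C in G | i \in C]| = c1).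

Lemma LGmax_le_Lmax : LGmax f G c1 <= Lmax f.
Proof.
apply: bigmax_le => [|i _]; first exact: Lmax_ge0.
apply: le_trans (_ : c1%:R^-1 * \sum_(C in G | i \in C) Lmax f <= _).
  by rewrite ler_wpM2l ?invr_ge0 ?ler0n //; apply: ler_sum => C /andP[_ /LC_le_Lmax].
by rewrite (sum_family_mem_cst G_regular) mulVnK.
Qed.

Variable tau : nat.
Hypothesis G_uniform : {in G, forall C : {set 'I_n}, #|C| = tau}.

Lemma favg_family x : favg f x = #|G|%:R^-1 * \sum_(C in G) fC f C x.
Proof.
rewrite /favg (eq_bigr (fun i => c1%:R^-1 * \sum_(C in G | i \in C) f i x)) => [|i _].
  rewrite -(family_average G_regular G_uniform); congr (_ * _).
  by apply: eq_bigr => C /G_uniform <-.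
by rewrite (sum_family_mem_cst G_regular) mulVnK.
Qed.

Lemma Lall_le_mean_LC : Lall f <= #|G|%:R^-1 * \sum_(C in G) LC f C.
Proof.
rewrite /Lall (_ : favg f = \sum_(C in G) #|G|%:R^-1 *: fC f C); last first.
  by rewrite fct_sumE; apply/funext => x; rewrite favg_family mulr_sumr.
rewrite mulr_sumr; apply: Lsmooth_wsum_le => C _; last exact: smooth_fC.
by rewrite invr_ge0 ler0n.
Qed.

Hypothesis tau_gt0 : (0 < tau)%N.

Lemma mean_LC_le_LGmax : #|G|%:R^-1 * \sum_(C in G) LC f C <= LGmax f G c1.
Proof.
rewrite (eq_bigr (fun C : {set 'I_n} => tau%:R^-1 * \sum_(i in C) LC f C)) => [|C GC].
  by rewrite (family_average G_regular G_uniform) mean_le_bigmax.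
by rewrite sumr_const G_uniform // mulVnK.
Qed.

End RegularSupport.
End SmoothnessConstants.

Theorem theorem4p17 (R : realType) (n d : nat) (f : 'I_n -> 'rV[R]_d -> R)
  (hf : forall i, smooth_fun (f i))
  (p : {set 'I_n} -> R) (hp : sampling p) (c1 : nat) (hc1 : (1 <= c1)%N)
  (hsupp : c1_uniform_support p c1) :
  LGmax f (supp p) c1 <= Lmax f /\
  (forall tau : nat, (1 <= tau)%N -> tau_uniform p tau ->
     (forall x, favg f x = (#|supp p|%:R)^-1 * \sum_(C in supp p) fC f C x) /\
     Lall f <= (#|supp p|%:R)^-1 * \sum_(C in supp p) LC f C /\
     (#|supp p|%:R)^-1 * \sum_(C in supp p) LC f C <= LGmax f (supp p) c1).
Proof.
have supp_regular : forall i, #|[set C in supp p | i \in C]| = c1 := hsupp.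
split; first exact: (LGmax_le_Lmax hf hc1 supp_regular).
move=> tau tau_gt0 [_ card_supp].
have supp_uniform : {in supp p, forall C : {set 'I_n}, #|C| = tau}.
  by move=> C; rewrite inE; apply: card_supp.
split; first exact: (favg_family f hc1 supp_regular supp_uniform).
split; first exact: (Lall_le_mean_LC hf hc1 supp_regular supp_uniform).
exact: (mean_LC_le_LGmax f supp_regular supp_uniform tau_gt0).
Qed.
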